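(* Let $\mathcal P$ be a pre-Hahn-localizable family of probability measures on $(\Omega,\mathcal F)$ with a localization $\mathcal Q$ whose supports $\{S_Q\}$ are pairwise disjoint, and let $\mathcal H_{\mathcal F}^{\mathcal Q}$ be its Hahn-extension. Then $\mathcal P^{\mathcal Q}$ is Hahn-localizable on $(\Omega,\mathcal H_{\mathcal F}^{\mathcal Q})$, and $\mathcal Q^{\mathcal Q}=\{Q^{\mathcal Q}:Q\in\mathcal Q\}$ is a Hahn-localization of $\mathcal P^{\mathcal Q}$ with support sets $S_{Q^{\mathcal Q}}=S_Q$.
   Context: $\mathcal A\lll\mathcal B$ means every $A\in\mathcal A$ is absolutely continuous w.r.t. some $B\in\mathcal B$; $\mathrm{sconv}$ denotes countable convex combinations. On a measurable space $(\Omega,\mathcal G)$, a family $\mathcal P$ is pre-Hahn-localizable with localization $\mathcal Q$ (probability measures on $\mathcal G$) and supports $S_Q\in\mathcal G$ if $Q(S_R)=\delta_{QR}$ for $Q,R\in\mathcal Q$ and $\mathcal Q\lll\mathcal P\lll\mathrm{sconv}(\mathcal Q)$; this localization is a Hahn-localization (and $\mathcal P$ Hahn-localizable) if for every family $E_Q\in\mathcal G$, $E_Q\subseteq S_Q$, there is $S\in\mathcal G$ with $Q(E_Q\setminus S)=0$ for all $Q$, and any $F\in\mathcal G$ with $Q(E_Q\setminus F)=0$ for all $Q$ satisfies $Q(S\setminus F)=0$ for all $Q$. Hahn-extension: $\mathcal H_{\mathcal F}^{\mathcal Q}=\sigma\big(\mathcal F\cup\{\bigcup_{Q}E_Q:E_Q\in\mathcal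 F,E_Q\subseteq S_Q\}\big)$. For a probability measure $P$ on $\mathcal F$ absolutely continuous w.r.t. some element of $\mathcal P$ (including elements of $\mathcal P$ and $\mathcal Q$), $P^{\mathcal Q}(A)=\sum_{Q\in\mathcal Q(P)}P(A\cap S_Q)$ with $\mathcal Q(P)=\{Q:P(S_Q)>0\}$ (countable), a measure on $\mathcal H_{\mathcal F}^{\mathcal Q}$ extending $P$; $\mathcal P^{\mathcal Q}=\{P^{\mathcal Q}:P\in\mathcal P\}$. *)

From HB Require Import structures.
From mathcomp Require Import all_boot all_order all_algebra.
From mathcomp Require Import all_classical all_reals all_analysis.
Set Implicit Arguments. Unset Strict Implicit. Unset Printing Implicit Defensive.
Import Order.TTheory GRing.Theory Num.Theory.
Local Open Scope classical_set_scope.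
Local Open Scope ring_scope.
Local Open Scope ereal_scope.

Section Defs.
Context {R : realType} {T : Type}.

(* A "measure on G" is represented by a set function on all subsets of T;
   only its values on G matter. *)
Definition prob_on (G : set (set T)) (mu : set T -> \bar R) : Prop :=
  [/\ mu set0 = 0,
      (forall A, G A -> 0 <= mu A),
      (forall E : nat -> set T, (forall n, G (E n)) -> trivIset setT E ->
         mu (\bigcup_n E n) = \sum_(0 <= n <oo) mu (E n)) &
      mu setT = 1].

Definition abs_cont (G : set (set T)) (mu nu : set T -> \bar R) : Prop :=
  forall A, G A -> nu A = 0 -> mu A = 0.

Definition lll (G : set (set T)) (A B : set (set T -> \bar R)) : Prop :=
  forall mu, A mu -> exists2 nu, B nu & abs_cont G mu nu.

Definition sconv (A : set (set T -> \bar R)) : set (set T -> \bar R) :=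
  [set mu | exists (c : nat -> R) (q : nat -> set T -> \bar R),
     [/\ (forall n, A (q n)), (forall n, (0 <= c n)%R),
         \sum_(0 <= n <oo) (c n)%:E = 1 &
         mu = fun X => \sum_(0 <= n <oo) ((c n)%:E * q n X)]].

Definition pre_hahn_localization {I : choiceType} (G : set (set T))
    (Pf : set (set T -> \bar R)) (Q : I -> set T -> \bar R) (S : I -> set T) : Prop :=
  sigma_algebra setT G /\
  (forall P, Pf P -> prob_on G P) /\
  (forall i, prob_on G (Q i)) /\
  (forall i, G (S i)) /\
  (forall i j, (i = j -> Q i (S j) = 1) /\ (i <> j -> Q i (S j) = 0)) /\
  lll G (range Q) Pf /\
  lll G Pf (sconv (range Q)).

Definition hahn_localization {I : choiceType} (G : set (set T))
    (Pf : set (set T -> \bar R)) (Q : I -> set T -> \bar R) (S : I -> set T) : Prop :=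
  pre_hahn_localization G Pf Q S /\
  forall E : I -> set T, (forall i, G (E i) /\ E i `<=` S i) ->
    exists S0, [/\ G S0,
      (forall i, Q i (E i `\` S0) = 0) &
      (forall F, G F -> (forall i, Q i (E i `\` F) = 0) ->
         forall i, Q i (S0 `\` F) = 0)].

Definition hahn_localizable (G : set (set T)) (Pf : set (set T -> \bar R)) : Prop :=
  exists (I : choiceType) (Q : I -> set T -> \bar R) (S : I -> set T),
    hahn_localization G Pf Q S.

Definition hahn_ext {I : choiceType} (F : set (set T)) (S : I -> set T) : set (set T) :=
  <<s setT, F `|` [set A | exists E : I -> set T,
      (forall i, F (E i) /\ E i `<=` S i) /\ A = \bigcup_i E i] >>.

Definition hahn_ext_meas {I : choiceType} (S : I -> set T) (P : set T -> \bar R) : set T -> \bar R :=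
  fun A => esum [set i | (0 < P (S i))%E] (fun i => P (A `&` S i)).

End Defs.

(* The Hahn extension H is generated by F and the unions of families E_i in F with
   E_i <= S_i; since the S_i are disjoint, every A in H still meets each S_i in a set
   of F. A member P of the family is absolutely continuous w.r.t. a countable mixture
   of measures Q_(k n), hence concentrated on U = \bigcup_n S_(k n), and disjointness
   turns the defining sum of P^Q into P^Q(A) = P(A `&` U); in particular
   Q_i^Q(A) = Q_i(A `&` S_i). With these trace formulas every clause of the
   localization transfers from F to H, and for E_i <= S_i in H the union of the E_i
   is itself in H and is the required essential supremum. *)

From HB Require Import structures.
From mathcomp Require Import all_boot all_order all_algebra.
From mathcomp Require Import all_classical all_reals all_analysis.
From mathcomp Require Import lra.
Set Implicit Arguments. Unset Strict Implicit.
Import Order.TTheory GRing.Theory Num.Theory.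
Local Open Scope classical_set_scope.
Local Open Scope ereal_scope.

Section sigma_algebra_closure.
Context {T : Type} (G : set (set T)).
Hypothesis sG : sigma_algebra setT G.

Lemma salgC A : G A -> G (~` A).
Proof. by case: sG => _ GC _ /GC; rewrite setTD. Qed.

Lemma salgT : G setT.
Proof. by rewrite -setC0; apply: salgC; case: sG. Qed.

Lemma salgU A B : G A -> G B -> G (A `|` B).
Proof.
case: sG => G0 _ GU GA GB; rewrite -bigcup2E; apply: GU.
by case=> [|[|n]].
Qed.

Lemma salgI A B : G A -> G B -> G (A `&` B).
Proof.
by move=> GA GB; rewrite -[_ `&` _]setCK setCI; apply/salgC/salgU; apply: salgC.
Qed.

Lemma salgD A B : G A -> G B -> G (A `\` B).
Proof. by move=> GA GB; rewrite setDE; apply: salgI => //; apply: salgC. Qed.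

End sigma_algebra_closure.

Section prob_on_theory.
Context {R : realType} {T : Type} (G : set (set T)) (mu : set T -> \bar R).
Hypotheses (sG : sigma_algebra setT G) (pmu : prob_on G mu).

Lemma prob_on0 : mu set0 = 0. Proof. by case: pmu. Qed.

Lemma prob_on_ge0 A : G A -> 0 <= mu A. Proof. by case: pmu => _ + _ _; apply. Qed.

Lemma prob_onT : mu setT = 1. Proof. by case: pmu. Qed.

Lemma prob_on_sigma_additive (E : nat -> set T) : (forall n, G (E n)) ->
  trivIset setT E -> mu (\bigcup_n E n) = \sum_(0 <= n <oo) mu (E n).
Proof. by case: pmu => _ _ + _; apply. Qed.

Lemma prob_onU A B : G A -> G B -> A `&` B = set0 -> mu (A `|` B) = mu A + mu B.
Proof.
move=> GA GB AB0; have G0 : G set0 by case: sG.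
rewrite -bigcup2E prob_on_sigma_additive; first last.
- by rewrite -trivIset_bigcup2.
- by case=> [|[|n]].
rewrite (nneseries_split _ 2); last by case=> [|[|n]] _ /=; rewrite ?prob_on0 ?prob_on_ge0.
rewrite eseries0 ?adde0; last by case=> [|[|n]] // _ _; rewrite prob_on0.
by rewrite big_nat_recr //= big_nat_recr //= big_geq // add0e.
Qed.

Lemma le_prob_on A B : G A -> G B -> A `<=` B -> mu A <= mu B.
Proof.
move=> GA GB AB; have GBA : G (B `\` A) by apply: salgD.
by rewrite -(setDUK AB) prob_onU ?setDIK // leeDl // prob_on_ge0.
Qed.

Lemma prob_on_eq0_subset A B : G A -> G B -> A `<=` B -> mu B = 0 -> mu A = 0.
Proof.
by move=> GA GB AB mB0; apply/le_anti; rewrite prob_on_ge0 // -mB0 le_prob_on.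
Qed.

Lemma prob_on_setI_conull B X : G B -> G X -> mu (~` B) = 0 -> mu X = mu (X `&` B).
Proof.
move=> GB GX mB0; have GXB : G (X `&` B) by apply: salgI.
have GXC : G (X `&` ~` B) by apply: salgI => //; apply: salgC.
rewrite -{1}(setIT X) -(setUCr B) setIUr prob_onU //; last first.
  by rewrite setIACA setICr setI0.
by rewrite (prob_on_eq0_subset GXC (salgC sG GB) (@subIsetr _ _ _)) ?adde0.
Qed.

Lemma prob_on_conull_eq1 B : G B -> mu (~` B) = 0 -> mu B = 1.
Proof.
by move=> GB mB0; rewrite -prob_onT (prob_on_setI_conull GB (salgT sG)) // setTI.
Qed.

Lemma prob_on_eq1_conull B : G B -> mu B = 1 -> mu (~` B) = 0.
Proof.
move=> GB mB1; have := prob_onT.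
rewrite -(setUCr B) prob_onU ?setICr // ?mB1; last exact: salgC.
by case: (mu (~` B)) => [r [] ? | |] //; congr EFin; lra.
Qed.

End prob_on_theory.

Lemma prob_on_trace {R : realType} {T : Type} (F H : set (set T))
    (nu f : set T -> \bar R) (V : set T) :
  prob_on F nu -> sigma_algebra setT H -> (forall A, H A -> F (A `&` V)) -> nu V = 1 ->
  (forall A, H A -> f A = nu (A `&` V)) -> prob_on H f.
Proof.
move=> pnu sH HV nuV fE; have [H0 _ HU] := sH; split.
- by rewrite fE // set0I (prob_on0 pnu).
- by move=> A HA; rewrite fE // (prob_on_ge0 pnu (HV _ HA)).
- move=> E HE tE; rewrite fE; last exact: HU.
  rewrite setI_bigcupl (prob_on_sigma_additive pnu); last 2 first.
  + by move=> n; apply: HV.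
  + by move=> i j _ _ [x [[Ei _] [Ej _]]]; apply: tE => //; exists x.
  by apply: eq_eseriesr => n _; rewrite fE.
- by rewrite fE ?setTI //; exact: salgT.
Qed.

Section first_occurrences.
Context {I : choiceType} (k : nat -> I).

Definition first_occ := [set n | forall m, (m < n)%N -> k m <> k n].

Lemma first_occ_range n : exists2 m, first_occ m & k m = k n.
Proof.
elim/ltn_ind: n => n IH; have [|] := pselect (first_occ n); first by exists n.
move=> /existsNP[m /not_implyP[mn /contrapT <-]]; exact: IH.
Qed.

Lemma first_occ_inj n m : first_occ n -> first_occ m -> k n = k m -> n = m.
Proof.
move=> Kn Km knm; case: (ltngtP n m) => // [nm|mn]; first by case: (Km n nm).
by case: (Kn m mn).
Qed.

Lemma esum_range_first_occ {R : realType} (g : I -> \bar R) : (forall i, 0 <= g i) ->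
  esum (range k) g = \sum_(n <oo | n \in first_occ) g (k n).
Proof.
move=> g0; rewrite nneseries_esum // set_mem_set; apply: reindex_esum; split.
- by move=> n _; exists n.
- by move=> n m /set_mem Kn /set_mem Km; apply: first_occ_inj.
- by move=> _ [n _ <-]; have [m Km <-] := first_occ_range n; exists m.
Qed.

Lemma prob_on_bigcup_first_occ {R : realType} {T : Type} (G : set (set T))
    (mu : set T -> \bar R) (B : I -> set T) :
  sigma_algebra setT G -> prob_on G mu -> (forall i, G (B i)) ->
  (forall i j, i <> j -> B i `&` B j = set0) ->
  mu (\bigcup_n B (k n)) = \sum_(n <oo | n \in first_occ) mu (B (k n)).
Proof.
move=> sG pmu GB disjB; pose D n := if n \in first_occ then B (k n) else set0.
have -> : \bigcup_n B (k n) = \bigcup_n D n.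
  apply/seteqP; split=> x [n _ Bx]; last first.
    by exists n => //; move: Bx; rewrite /D; case: ifP.
  have [m Km kmn] := first_occ_range n.
  by exists m => //; rewrite /D mem_set // kmn.
rewrite (prob_on_sigma_additive pmu); last 2 first.
- by move=> n; rewrite /D; case: ifP => _ //; case: sG.
- move=> n m _ _ [x []]; rewrite /D.
  case: ifP => // /set_mem Kn; case: ifP => // /set_mem Km Bn Bm.
  apply: (first_occ_inj Kn Km); apply: contrapT => knm.
  by rewrite -[False]/(set0 x) -(disjB _ _ knm).
rewrite [RHS]eseries_mkcond; apply: eq_eseriesr => n _.
by rewrite /D; case: ifP => // _; rewrite (prob_on0 pmu).
Qed.

End first_occurrences.

Definition mixture {R : realType} {T : Type} (c : nat -> R) (q : nat -> set T -> \bar R)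
    : set T -> \bar R :=
  fun X => \sum_(0 <= n <oo) ((c n)%:E * q n X).

Lemma sconv_range_mixture {R : realType} {T : Type} {I : choiceType}
    (Q : I -> set T -> \bar R) (mu : set T -> \bar R) :
  sconv (range Q) mu -> exists c k, [/\ (forall n, 0 <= c n)%R,
    \sum_(0 <= n <oo) (c n)%:E = 1 & mu = mixture c (Q \o k)].
Proof.
move=> [c [q [qQ c0 c1 ->]]].
have [k kq] : {k : nat -> I & forall n, Q (k n) = q n}.
  apply: (@choice _ _ (fun n i => Q i = q n)) => n.
  by have [i _ <-] := qQ n; exists i.
exists c, k; split=> //; apply/funext => X.
by apply: eq_eseriesr => n _; rewrite /= kq.
Qed.

Section hahn_extension.
Context {R : realType} {T : Type} {I : choiceType}.
Variables (F : set (set T)) (S : I -> set T).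
Hypotheses (sF : sigma_algebra setT F) (FS : forall i, F (S i))
  (disjS : forall i j, i <> j -> S i `&` S j = set0).

Local Notation H := (hahn_ext F S).

Lemma bigcup_setI_support (E : I -> set T) i : (forall j, E j `<=` S j) ->
  \bigcup_j E j `&` S i = E i.
Proof.
move=> ES; apply/seteqP; split=> [x [[j _ Ejx] Six]|x Eix]; last first.
  by split; [exists i|exact: ES].
have [<-//|ji] := pselect (j = i).
have : (S j `&` S i) x by split=> //; exact: ES.
by rewrite disjS.
Qed.

(* The sets A with A `&` S_i in F for all i form a sigma-algebra containing the
   generators of H. *)
Lemma hahn_ext_setI_support A i : H A -> F (A `&` S i).
Proof.
move=> HA; move: A HA i; apply: smallest_sub.
  split=> [i|A FAS i|A FAS i]; first by rewrite set0I; case: sF.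
  - have -> : (setT `\` A) `&` S i = S i `\` (A `&` S i).
      by rewrite setDIr setDv setU0 setTD setDE setIC.
    exact: salgD.
  - by rewrite setI_bigcupl; case: sF => _ _; apply=> n; exact: FAS.
move=> A [FA i|[E [FES ->]] i]; first exact: salgI.
rewrite bigcup_setI_support; first by have [] := FES i.
by move=> j; have [] := FES j.
Qed.

Lemma hahn_ext_setI_bigcup_support (k : nat -> I) A :
  H A -> F (A `&` \bigcup_n S (k n)).
Proof.
move=> HA; rewrite setI_bigcupr; case: sF => _ _; apply=> n.
exact: hahn_ext_setI_support.
Qed.

Lemma F_bigcup_support (k : nat -> I) : F (\bigcup_n S (k n)).
Proof. by case: sF => _ _; apply. Qed.

Lemma prob_on_setC_bigcup_support (mu : set T -> \bar R) (k : nat -> I) n :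
  prob_on F mu -> mu (S (k n)) = 1 -> mu (~` \bigcup_m S (k m)) = 0.
Proof.
move=> pmu mS1; have FU := F_bigcup_support k.
apply: (prob_on_eq0_subset sF pmu (salgC sF FU) (salgC sF (FS (k n)))).
  by apply: subsetC; exact: bigcup_sup.
exact: (prob_on_eq1_conull sF pmu (FS (k n))).
Qed.

Lemma hahn_ext_meas_conull (mu : set T -> \bar R) (k : nat -> I) A :
  prob_on F mu -> mu (~` \bigcup_n S (k n)) = 0 -> H A ->
  hahn_ext_meas S mu A = mu (A `&` \bigcup_n S (k n)).
Proof.
move=> pmu mU0 HA; pose g i := mu (A `&` S i); have FU := F_bigcup_support k.
have FAS i : F (A `&` S i) := hahn_ext_setI_support i HA.
have esum_setT D : (forall i, ~ D i -> g i = 0) -> esum D g = esum setT g.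
  move=> Dg; rewrite esum_mkcond; apply: eq_esum => i _.
  by case: ifPn => // /negP; rewrite in_setE => /Dg/esym.
rewrite /hahn_ext_meas -/g esum_setT; last first.
  move=> i /negP; rewrite -leNgt => mS0.
  apply: (prob_on_eq0_subset sF pmu (FAS i) (FS i) (@subIsetr _ _ _)).
  by apply/le_anti; rewrite mS0 (prob_on_ge0 pmu).
rewrite -(esum_setT (range k)); last first.
  move=> i nki; apply: (prob_on_eq0_subset sF pmu (FAS i) (salgC sF FU) _ mU0).
  move=> x [_ Six] [n _ Sknx]; apply: nki; exists n => //.
  by apply: contrapT => kni; have : (S (k n) `&` S i) x by []; rewrite disjS.
rewrite esum_range_first_occ; last by move=> i; exact: (prob_on_ge0 pmu).
rewrite setI_bigcupr (prob_on_bigcup_first_occ _ sF pmu FAS) // => i j ij.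
by rewrite setIACA disjS // setI0.
Qed.

Lemma hahn_ext_meas_support (mu : set T -> \bar R) i A :
  prob_on F mu -> mu (S i) = 1 -> H A -> hahn_ext_meas S mu A = mu (A `&` S i).
Proof.
move=> pmu mS1 HA; have SiE : \bigcup_(n : nat) S i = S i.
  by apply: bigcup_const; exists 0%N.
rewrite -SiE (hahn_ext_meas_conull (k := fun=> i)) //.
exact: (prob_on_setC_bigcup_support (k := fun=> i) (n := 0) pmu).
Qed.

Lemma hahn_ext_sigma_algebra : sigma_algebra setT H.
Proof. exact: smallest_sigma_algebra. Qed.

Lemma sub_hahn_ext : F `<=` H.
Proof. by move=> A FA; apply: sub_sigma_algebra; left. Qed.

Lemma prob_on_hahn_ext_meas (mu : set T -> \bar R) (k : nat -> I) :
  prob_on F mu -> mu (~` \bigcup_n S (k n)) = 0 -> prob_on H (hahn_ext_meas S mu).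
Proof.
move=> pmu mU0; have HU := hahn_ext_setI_bigcup_support k.
apply: (prob_on_trace pmu hahn_ext_sigma_algebra HU).
  exact: (prob_on_conull_eq1 sF pmu (F_bigcup_support k) mU0).
by move=> A HA; apply: hahn_ext_meas_conull.
Qed.

Variables (Pf : set (set T -> \bar R)) (Q : I -> set T -> \bar R).
Hypotheses (pPf : forall P, Pf P -> prob_on F P) (pQ : forall i, prob_on F (Q i))
  (QS : forall i, Q i (S i) = 1).
Hypotheses (QP : lll F (range Q) Pf) (PQ : lll F Pf (sconv (range Q))).

Local Notation QH := (fun i => hahn_ext_meas S (Q i)).

Lemma Pf_abs_cont_mixture P : Pf P -> exists c k, [/\ (forall n, 0 <= c n)%R,
  \sum_(0 <= n <oo) (c n)%:E = 1, abs_cont F P (mixture c (Q \o k)) &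
  P (~` \bigcup_n S (k n)) = 0].
Proof.
move=> PfP; have [_ /sconv_range_mixture[c [k [c0 c1 ->]]] Pac] := PQ PfP.
exists c, k; split=> //; apply: Pac; first exact: (salgC sF (F_bigcup_support k)).
apply: eseries0 => n _ _ /=.
by rewrite (prob_on_setC_bigcup_support (n := n) (pQ (k n))) ?mule0.
Qed.

Lemma prob_on_hahn_ext_meas_Pf P : Pf P -> prob_on H (hahn_ext_meas S P).
Proof.
move=> PfP; have [c [k [_ _ _ PU0]]] := Pf_abs_cont_mixture PfP.
exact: (prob_on_hahn_ext_meas (pPf PfP) PU0).
Qed.

Lemma prob_on_hahn_ext_meas_Q i : prob_on H (QH i).
Proof.
apply: (prob_on_hahn_ext_meas (k := fun=> i) (pQ i)).
exact: (prob_on_setC_bigcup_support (n := 0) (pQ i)).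
Qed.

Lemma hahn_ext_meas_Q_support i j :
  (i = j -> QH i (S j) = 1) /\ (i <> j -> QH i (S j) = 0).
Proof.
rewrite /= (hahn_ext_meas_support (pQ i) (QS i) (sub_hahn_ext (FS j))).
split=> [<-|ij]; first by rewrite setIid.
by rewrite disjS ?(prob_on0 (pQ i)) // => /esym.
Qed.

Lemma lll_hahn_ext_Q_Pf : lll H (range QH) (hahn_ext_meas S @` Pf).
Proof.
move=> _ [i _ <-]; have [P PfP Qac] := QP (imageT Q i).
have [c [k [_ _ _ PU0]]] := Pf_abs_cont_mixture PfP; have pP := pPf PfP.
exists (hahn_ext_meas S P); first by exists P.
move=> A HA; rewrite (hahn_ext_meas_conull pP PU0 HA) => PAU0.
have FAS := hahn_ext_setI_support i HA.
rewrite (hahn_ext_meas_support (pQ i) (QS i) HA); apply: Qac => //.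
rewrite (prob_on_setI_conull sF pP (F_bigcup_support k) FAS PU0).
apply: (prob_on_eq0_subset sF pP _ (hahn_ext_setI_bigcup_support k HA) _ PAU0).
  exact: (salgI sF FAS (F_bigcup_support k)).
by move=> x [[Ax _] Ux].
Qed.

Lemma lll_hahn_ext_Pf_sconv : lll H (hahn_ext_meas S @` Pf) (sconv (range QH)).
Proof.
move=> _ [P PfP <-]; have [c [k [c0 c1 Pac PU0]]] := Pf_abs_cont_mixture PfP.
have QkU0 n : Q (k n) (~` \bigcup_m S (k m)) = 0.
  exact: (prob_on_setC_bigcup_support (n := n) (pQ (k n))).
exists (mixture c (QH \o k)).
  by exists c, (QH \o k); split=> // n; exists (k n).
move=> A HA mix0; rewrite (hahn_ext_meas_conull (pPf PfP) PU0 HA).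
apply: Pac; first exact: hahn_ext_setI_bigcup_support.
rewrite -mix0; apply: eq_eseriesr => n _ /=.
by rewrite (hahn_ext_meas_conull (pQ (k n)) (QkU0 n) HA).
Qed.

Lemma hahn_ext_Q_hahn_property (E : I -> set T) :
  (forall i, H (E i) /\ E i `<=` S i) ->
  exists S0, [/\ H S0, (forall i, QH i (E i `\` S0) = 0) &
    (forall G, H G -> (forall i, QH i (E i `\` G) = 0) ->
       forall i, QH i (S0 `\` G) = 0)].
Proof.
move=> HE; have sH := hahn_ext_sigma_algebra.
have ES i : E i `<=` S i by case: (HE i).
have HEi i : H (E i) by case: (HE i).
have QHE i A : H A -> QH i A = Q i (A `&` S i).
  exact: (hahn_ext_meas_support (pQ i) (QS i)).
have HS0 : H (\bigcup_i E i).
  apply: sub_sigma_algebra; right; exists E; split=> // i; split=> //.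
  by rewrite -(setIidl (ES i)); apply: hahn_ext_setI_support.
exists (\bigcup_i E i); split=> // [i|G HG EG0 i].
  have -> : E i `\` \bigcup_j E j = set0 by rewrite setD_eq0; exact: bigcup_sup.
  by rewrite /= QHE ?set0I ?(prob_on0 (pQ i)) //; case: sH.
have := EG0 i; rewrite /= QHE ?QHE;
  [|exact: (salgD sH HS0 HG)|exact: (salgD sH (HEi i) HG)].
by rewrite !setIDAC !setIDA bigcup_setI_support // setIidl.
Qed.

End hahn_extension.

Theorem lemma4p5 (R : realType) (T : Type) (I : choiceType) (F : set (set T))
    (Pf : set (set T -> \bar R)) (Q : I -> set T -> \bar R) (S : I -> set T) :
  pre_hahn_localization F Pf Q S ->
  (forall i j, i <> j -> S i `&` S j = set0) ->
  hahn_localizable (hahn_ext F S) (hahn_ext_meas S @` Pf) /\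
  hahn_localization (hahn_ext F S) (hahn_ext_meas S @` Pf)
    (fun i => hahn_ext_meas S (Q i)) S.
Proof.
move=> [sF [pPf [pQ [FS [QS_delta [QP PQ]]]]]] disjS.
have QS i : Q i (S i) = 1 by case: (QS_delta i i) => ->.
suff hl : hahn_localization (hahn_ext F S) (hahn_ext_meas S @` Pf)
    (fun i => hahn_ext_meas S (Q i)) S.
  by split=> //; exists I, (fun i => hahn_ext_meas S (Q i)), S.
split; last exact: (hahn_ext_Q_hahn_property sF FS disjS pQ QS).
split; first exact: hahn_ext_sigma_algebra.
split.
  by move=> _ [P PfP <-]; exact: (prob_on_hahn_ext_meas_Pf sF FS disjS pPf pQ QS PQ).
split; first exact: (prob_on_hahn_ext_meas_Q sF FS disjS pQ QS).
split; first by move=> i; apply: sub_hahn_ext.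
split; first exact: (hahn_ext_meas_Q_support sF FS disjS pQ QS).
split; first exact: (lll_hahn_ext_Q_Pf sF FS disjS pPf pQ QS QP PQ).
exact: (lll_hahn_ext_Pf_sconv sF FS disjS pPf pQ QS PQ).
Qed.
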